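(* Let $\alpha:M_s\to M_s$ be a completely positive linear map on the algebra of complex $s\times s$ matrices. If $\alpha^m=0$ for some integer $m\ge1$, then $\alpha^s=0$; in particular the nilpotency index of $\alpha$ is at most $s$. *)

From HB Require Import structures.
From mathcomp Require Import all_boot all_order all_algebra.
Set Implicit Arguments. Unset Strict Implicit. Unset Printing Implicit Defensive.
Import Order.TTheory GRing.Theory Num.Theory.
Local Open Scope ring_scope.

Definition adjmx (C : numClosedFieldType) m n (A : 'M[C]_(m, n)) : 'M[C]_(n, m) :=
  (map_mx Num.conj A)^T.

(* An element of M_n(M_s) is given as an n x n array of s x s blocks.
   It is positive (semidefinite) iff its quadratic form  sum_{i,j} x_i^* A_ij x_j
   is >= 0 for every vector (x_i)_i in (C^s)^n  (over C this also forces hermitian). *)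
Definition psd_block (C : numClosedFieldType) (s n : nat)
  (A : 'I_n -> 'I_n -> 'M[C]_s) : Prop :=
  forall x : 'I_n -> 'cV[C]_s,
    0 <= \sum_(i < n) \sum_(j < n) (adjmx (x i) *m A i j *m x j) 0 0.

(* alpha : M_s -> M_s is completely positive: id_n (x) alpha is positive for all n. *)
Definition completely_positive (C : numClosedFieldType) (s : nat)
  (alpha : 'M[C]_s -> 'M[C]_s) : Prop :=
  forall (n : nat) (A : 'I_n -> 'I_n -> 'M[C]_s),
    psd_block A -> psd_block (fun i j => alpha (A i j)).

(* If X and Y are positive and ker X is contained in ker Y, then Y <= c X for
   some c, hence alpha Y <= c alpha X and ker (alpha X) is contained in
   ker (alpha Y).  With X = 1 and Y = alpha 1 this makes the kernels K_k of
   alpha^k(1) an increasing chain which, once it stalls, stays constant.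
   Nilpotency forces K_m = C^s, so the chain grows strictly until it is full,
   whence K_s = C^s and alpha^s(1) = 0.  Then alpha^s kills every positive Y
   (as ker 1 = 0 lies in ker Y), and positive matrices span M_s by
   polarization. *)

From HB Require Import structures.
From mathcomp Require Import all_boot all_order all_algebra.
From mathcomp Require Import ring zify.
Import Order.TTheory GRing.Theory Num.Theory.
Local Open Scope ring_scope.
Set Implicit Arguments. Unset Strict Implicit. Unset Printing Implicit Defensive.

Section Adjoint.
Variable C : numClosedFieldType.

Lemma adjmxE m n (A : 'M[C]_(m, n)) : adjmx A = map_mx Num.conj A^T.
Proof. by rewrite /adjmx map_trmx. Qed.

Lemma adjmxM m n p (A : 'M[C]_(m, n)) (B : 'M[C]_(n, p)) :
  adjmx (A *m B) = adjmx B *m adjmx A.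
Proof. by rewrite /adjmx map_mxM trmx_mul. Qed.

Lemma adjmxK m n (A : 'M[C]_(m, n)) : adjmx (adjmx A) = A.
Proof. by apply/matrixP=> i j; rewrite !mxE conjCK. Qed.

Lemma adjmxD m n (A B : 'M[C]_(m, n)) : adjmx (A + B) = adjmx A + adjmx B.
Proof. by apply/matrixP=> i j; rewrite !mxE rmorphD. Qed.

Lemma adjmxZ m n a (A : 'M[C]_(m, n)) : adjmx (a *: A) = a^* *: adjmx A.
Proof. by apply/matrixP=> i j; rewrite !mxE rmorphM. Qed.

Lemma adjmx_delta n (i : 'I_n) : adjmx (delta_mx i 0 : 'cV[C]_n) = delta_mx 0 i.
Proof. by apply/matrixP=> a b; rewrite !mxE rmorph_nat andbC. Qed.

End Adjoint.

Section PositiveMatrices.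
Variables (C : numClosedFieldType) (n : nat).
Implicit Types (A X Y U : 'M[C]_n) (x y v w : 'cV[C]_n).

Definition hform A x y := (adjmx x *m A *m y) 0 0.
Definition qform A x := hform A x x.
Definition psdmx A := forall x, 0 <= qform A x.

Lemma hform_delta A i j : hform A (delta_mx i 0) (delta_mx j 0) = A i j.
Proof. by rewrite /hform adjmx_delta -rowE -colE !mxE. Qed.

Lemma qformE A y : qform A y = \sum_a \sum_b (y a 0)^* * A a b * y b 0.
Proof.
rewrite /qform /hform mxE; under eq_bigr do rewrite mxE mulr_suml.
rewrite exchange_big; apply: eq_bigr => a _; apply: eq_bigr => b _.
by rewrite /adjmx !mxE.
Qed.

Lemma qform_mulmx A U y : qform A (U *m y) = qform (adjmx U *m A *m U) y.
Proof. by rewrite /qform /hform adjmxM !mulmxA. Qed.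

Lemma qformB A X x : qform (A - X) x = qform A x - qform X x.
Proof. by rewrite /qform /hform mulmxBr mulmxBl !mxE. Qed.

Lemma qformZ a A x : qform (a *: A) x = a * qform A x.
Proof. by rewrite /qform /hform -scalemxAr -scalemxAl mxE. Qed.

Lemma qformDZ A x y t : qform A (x + t *: y) =
  qform A x + t * hform A x y + t^* * hform A y x + t^* * t * qform A y.
Proof.
rewrite /qform /hform adjmxD adjmxZ !(mulmxDl, mulmxDr) -!scalemxAl -!scalemxAr.
move: (adjmx x *m A *m x) (adjmx y *m A *m x) (adjmx x *m A *m y) (adjmx y *m A *m y).
by move=> P Q R S; rewrite !mxE; ring.
Qed.

Lemma qform_diag (d : 'rV[C]_n) y :
  qform (diag_mx d) y = \sum_i d 0 i * `|y i 0| ^+ 2.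
Proof.
rewrite /qform /hform mul_mx_diag mxE; apply: eq_bigr => j _.
by rewrite normCK !mxE; ring.
Qed.

Lemma eq_conjC_of_real (u v : C) :
  u + v \is Num.real -> 'i * (u - v) \is Num.real -> u = v^*.
Proof.
move=> /CrealP; rewrite rmorphD /= => re_eq /CrealP.
rewrite rmorphM rmorphB /= conjCi => im_eq.
have herm : u - v^* = (u - v^*)^*.
  by rewrite rmorphB /= conjCK; transitivity (u + v - v - v^*); [ring | rewrite -re_eq; ring].
have skew : u - v^* = - (u - v^*)^*.
  rewrite rmorphB /= conjCK; apply: (mulfI (neq0Ci C)).
  by transitivity ('i * (u - v) - 'i * v^* + 'i * v); [ring | rewrite -im_eq; ring].
have : (u - v^*) *+ 2 = 0 by rewrite mulr2n {1}herm {2}skew addrN.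
by move/eqP; rewrite mulrn_eq0 /= subr_eq0 => /eqP.
Qed.

Lemma psdmx_herm A : psdmx A -> forall i j, A i j = (A j i)^*.
Proof.
move=> pA i j; set x : 'cV[C]_n := delta_mx i 0; set y : 'cV[C]_n := delta_mx j 0.
rewrite -(hform_delta A i j) -(hform_delta A j i); apply: eq_conjC_of_real.
- have -> : hform A x y + hform A y x = qform A (x + 1 *: y) - qform A x - qform A y.
    by rewrite qformDZ rmorph1; ring.
  by rewrite !rpredB ?ger0_real.
- have -> : 'i * (hform A x y - hform A y x) =
      qform A (x + 'i *: y) - qform A x - qform A y.
    have ii : 'i * 'i = -1 :> C by rewrite -expr2 sqrCi.
    by rewrite qformDZ conjCi [- 'i * 'i]mulNr ii opprK; ring.
  by rewrite !rpredB ?ger0_real.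
Qed.

Lemma psdmx_spectral A : psdmx A -> exists U (d : 'rV[C]_n),
  [/\ U *m adjmx U = 1%:M, adjmx U *m U = 1%:M,
      A = adjmx U *m diag_mx d *m U & forall i, 0 <= d 0 i].
Proof.
move=> pA; have A_herm : A \is hermsymmx.
  apply/is_hermitianmxP; rewrite expr0 scale1r; apply/matrixP=> i j.
  by rewrite !mxE; exact: psdmx_herm.
have /orthomx_spectralP A_diag := hermitian_normalmx A_herm.
have /unitarymxP U_unitary := spectral_unitarymx A.
rewrite -adjmxE in U_unitary.
set U := spectralmx A in A_diag U_unitary; set d := spectral_diag A in A_diag.
have AE : A = adjmx U *m diag_mx d *m U.
  by rewrite {1}A_diag invmx_unitary ?spectral_unitarymx // adjmxE.
exists U, d; split => //; first exact: mulmx1C.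
move=> i; have := pA (adjmx U *m delta_mx i 0).
rewrite qform_mulmx {1}AE adjmxK !mulmxA U_unitary mul1mx -mulmxA U_unitary mulmx1.
by rewrite /qform hform_delta mxE eqxx mulr1n.
Qed.

Lemma psdmx_qform_eq0 A x : psdmx A -> qform A x = 0 -> A *m x = 0.
Proof.
move=> /psdmx_spectral[U [d [_ _ AE d_ge0]]].
rewrite AE -qform_mulmx qform_diag => /eqP; rewrite psumr_eq0 => [/allP terms0|i _]; last first.
  by rewrite mulr_ge0 ?exprn_ge0.
rewrite -!mulmxA; suff -> : diag_mx d *m (U *m x) = 0 by rewrite mulmx0.
apply/matrixP => i k; rewrite mul_diag_mx [in LHS]mxE [in RHS]mxE (ord1 k).
have /implyP/(_ isT) := terms0 i (mem_index_enum i).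
by rewrite mulf_eq0 expf_eq0 normr_eq0 /= => /orP[] /eqP ->; rewrite ?mul0r ?mulr0.
Qed.

(* Since [0^-1 = 0], the first sum only counts the nonzero weights. *)
Lemma sqr_norm_le_weighted (d y : 'I_n -> C) a :
  (forall k, 0 <= d k) -> d a != 0 ->
  `|y a| ^+ 2 <= (\sum_k (d k)^-1) * \sum_k d k * `|y k| ^+ 2.
Proof.
move=> d_ge0 da; rewrite -[`|y a| ^+ 2](mulKf da).
have term_ge0 k : 0 <= d k * `|y k| ^+ 2 by rewrite mulr_ge0 ?exprn_ge0.
apply: ler_pM; rewrite ?invr_ge0 //.
  by rewrite (bigD1 a) //= lerDl sumr_ge0 // => k _; rewrite invr_ge0.
by rewrite (bigD1 a) //= lerDl sumr_ge0.
Qed.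

Lemma normr_qform_le A (d : 'rV[C]_n) y :
  (forall k, 0 <= d 0 k) -> (forall a b, d 0 a = 0 \/ d 0 b = 0 -> A a b = 0) ->
  `|qform A y| <= (\sum_a \sum_b `|A a b|) * (\sum_k (d 0 k)^-1) * qform (diag_mx d) y.
Proof.
move=> d_ge0 A_supp; rewrite qform_diag -mulrA.
set ST := (\sum_k _) * (\sum_k _).
have y_le a : d 0 a != 0 -> `|y a 0| ^+ 2 <= ST.
  by rewrite /ST; apply: sqr_norm_le_weighted.
have term_le a b : `|(y a 0)^* * A a b * y b 0| <= `|A a b| * ST.
  have [da|da] := eqVneq (d 0 a) 0; first by rewrite A_supp ?(mulr0, mul0r, normr0) //; left.
  have [db|db] := eqVneq (d 0 b) 0; first by rewrite A_supp ?(mulr0, mul0r, normr0) //; right.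
  rewrite !normrM norm_conjC mulrAC [_ * `|A a b|]mulrC ler_wpM2l //.
  apply: le_trans (real_leif_mean_square (normr_real _) (normr_real _)) _.
  by rewrite ler_pdivrMr ?ltr0n // mulr_natr mulr2n lerD ?y_le.
rewrite qformE mulr_suml; apply: le_trans (ler_norm_sum _ _ _) _.
apply: ler_sum => a _; rewrite mulr_suml.
apply: le_trans (ler_norm_sum _ _ _) _.
by apply: ler_sum => b _; exact: term_le.
Qed.

Lemma psdmx_dominated X Y : psdmx X -> psdmx Y ->
  (forall x, X *m x = 0 -> Y *m x = 0) ->
  exists c, forall x, qform Y x <= c * qform X x.
Proof.
move=> pX pY kerXY; have [U [d [UU UU' XE d_ge0]]] := psdmx_spectral pX.
pose Y' := U *m Y *m adjmx U.
have pY' : psdmx Y' by move=> z; rewrite /Y' -[U in U *m Y]adjmxK -qform_mulmx.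
have Y'_col a b : d 0 b = 0 -> Y' a b = 0.
  move=> db; set e : 'cV[C]_n := delta_mx b 0.
  have Xe : X *m (adjmx U *m e) = 0.
    rewrite XE -!mulmxA [U *m _]mulmxA UU mul1mx.
    suff -> : diag_mx d *m e = 0 by rewrite mulmx0.
    apply/matrixP=> i k; rewrite mul_diag_mx !mxE.
    by have [->|] := eqVneq i b; rewrite ?db ?mul0r ?mulr0.
  have -> : Y' a b = (Y' *m e) a 0 by rewrite /e -colE /col mxE.
  by rewrite /Y' -!mulmxA kerXY // !mulmx0 mxE.
exists ((\sum_a \sum_b `|Y' a b|) * \sum_k (d 0 k)^-1) => x.
have -> : qform Y x = qform Y' (U *m x).
  by rewrite qform_mulmx /Y' !mulmxA UU' mul1mx -mulmxA UU' mulmx1.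
rewrite XE -qform_mulmx; apply: le_trans (real_ler_norm (ger0_real (pY' _))) _.
apply: normr_qform_le => // a b [da|db]; last exact: Y'_col.
by rewrite psdmx_herm // Y'_col ?rmorph0.
Qed.

Lemma psdmx1 : psdmx 1%:M.
Proof.
move=> x; rewrite /qform /hform mulmx1 mxE sumr_ge0 // => i _.
by rewrite !mxE mulrC mul_conjC_ge0.
Qed.

Lemma psdmx_rank1 v : psdmx (v *m adjmx v).
Proof.
move=> x; rewrite /qform /hform.
have -> : adjmx x *m (v *m adjmx v) *m x = adjmx x *m v *m adjmx (adjmx x *m v).
  by rewrite adjmxM adjmxK !mulmxA.
by rewrite mxE big_ord1 !mxE mul_conjC_ge0.
Qed.

Lemma polarization v w : 4 *: (v *m adjmx w) =
  \sum_(l <- [:: 1; -1; 'i; - 'i]) l *: ((v + l *: w) *m adjmx (v + l *: w)).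
Proof.
rewrite !big_cons big_nil addr0; apply/matrixP => a b.
rewrite !mxE !big_ord1 !mxE !rmorphD !rmorphM /= !rmorphN /= !rmorph1 conjCi.
have : 'i * 'i = -1 :> C by rewrite -expr2 sqrCi.
move: ('i : C) (v a 0) (w a 0) ((v b 0)^*) ((w b 0)^*) => j x1 x2 y1 y2 jj.
transitivity (4 * x1 * y2 + (j * j + 1) * (2 * x2 * y1 - 2 * x1 * y2)); last ring.
by rewrite jj addNr mul0r addr0 mulrA.
Qed.

Lemma linear_eq0_on_psdmx (V : lmodType C) (f : {linear 'M[C]_n -> V}) :
  (forall Y, psdmx Y -> f Y = 0) -> forall X, f X = 0.
Proof.
move=> f_psd X; rewrite (matrix_sum_delta X) linear_sum big1 // => i _.
rewrite linear_sum big1 // => j _; rewrite linearZ /=.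
suff : f (4 *: delta_mx i j) = 0.
  by rewrite linearZ => /eqP; rewrite scaler_eq0 pnatr_eq0 /= => /eqP ->; rewrite scaler0.
rewrite -(mul_delta_mx (0 : 'I_1)) -adjmx_delta polarization linear_sum.
by rewrite big1_seq // => l _; rewrite linearZ /= f_psd ?scaler0 //; apply: psdmx_rank1.
Qed.

End PositiveMatrices.

Arguments psdmx1 {C n}.

Section ColumnKernel.
Variables (F : fieldType) (m n : nat).
Implicit Types A B : 'M[F]_(m, n).

(* [kermx] is a row-vector kernel: the rows of [colker A] span the transposes
   of the column vectors [x] with [A *m x = 0]. *)
Definition colker A := kermx A^T.

Lemma sub_colker A (x : 'cV[F]_n) : (x^T <= colker A)%MS = (A *m x == 0).
Proof. by rewrite sub_kermx -trmx_mul trmx_eq0. Qed.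

Lemma colker_subP A B :
  reflect (forall x : 'cV_n, A *m x = 0 -> B *m x = 0) (colker A <= colker B)%MS.
Proof.
apply: (iffP idP) => [sAB x /eqP Ax0 | AB].
  by apply/eqP; rewrite -sub_colker (submx_trans _ sAB) // sub_colker Ax0.
apply/row_subP => i; rewrite -[row i (colker A)]trmxK sub_colker; apply/eqP/AB/eqP.
by rewrite -sub_colker trmxK row_sub.
Qed.

Lemma colker_full A : row_full (colker A) = (A == 0).
Proof.
rewrite /row_full mxrank_ker mxrank_tr -mxrank_eq0.
by have := rank_leq_col A; lia.
Qed.

End ColumnKernel.

Section SubspaceChain.
Variables (F : fieldType) (p n : nat) (V : nat -> 'M[F]_(p, n)).
Hypothesis V_mono : forall k, (V k <= V k.+1)%MS.
Hypothesis V_stable : forall k, (V k.+1 <= V k)%MS -> (V k.+2 <= V k.+1)%MS.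

Lemma chain_leq j k : (j <= k)%N -> (V j <= V k)%MS.
Proof.
move/subnKC <-; elim: (k - j)%N => [|i IH]; first by rewrite addn0.
by rewrite addnS (submx_trans IH).
Qed.

Lemma chain_stable k : (V k.+1 <= V k)%MS -> forall j, (V j <= V k)%MS.
Proof.
move=> stable_k; have step i : (V (k + i).+1 <= V (k + i))%MS.
  by elim: i => [|i IH]; rewrite ?addn0 // addnS V_stable.
move=> j; have [jk|kj] := leqP j k; first exact: chain_leq.
rewrite -(subnKC (ltnW kj)); elim: (j - k)%N => [|i IH]; first by rewrite addn0.
by rewrite addnS (submx_trans (step i)).
Qed.

Lemma chain_rank m : row_full (V m) -> forall k, (minn k n <= \rank (V k))%N.
Proof.
move=> full_m; elim=> [|k IH]; first by rewrite min0n.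
have le_rank := mxrank_leqif_sup (V_mono k).
have [grow|] := ltnP (\rank (V k)) (\rank (V k.+1)); first lia.
rewrite (geq_leqif le_rank) => /chain_stable/(_ m) sub_mk.
have /eqP full_k : row_full (V k) by rewrite -sub1mx (submx_trans _ sub_mk) ?sub1mx.
have := mxrankS (V_mono k); lia.
Qed.

Lemma chain_full m : row_full (V m) -> row_full (V n).
Proof. by move/chain_rank/(_ n); rewrite minnn /row_full eqn_leq rank_leq_col. Qed.

End SubspaceChain.

Section IteratedLinear.
Variables (R : pzRingType) (V : lmodType R) (f : {linear V -> V}).

Lemma iter_is_linear k : linear (iter k f).
Proof. by elim: k => [|k IH] a u v //=; rewrite IH linearP. Qed.

Definition iterlin k : {linear V -> V} :=
  HB.pack (iter k f) (GRing.isLinear.Build _ _ _ _ (iter k f) (iter_is_linear k)).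

End IteratedLinear.

Section CompletelyPositive.
Variables (C : numClosedFieldType) (s : nat) (alpha : {linear 'M[C]_s -> 'M[C]_s}).
Hypothesis alpha_cp : completely_positive alpha.
Implicit Types X Y : 'M[C]_s.

Lemma cp_psdmx X : psdmx X -> psdmx (alpha X).
Proof.
move=> pX x; have := @alpha_cp 1 (fun _ _ => X) _ (fun _ => x).
by rewrite !big_ord1; apply => y; rewrite !big_ord1; exact: pX.
Qed.

Lemma psdmx_iter k X : psdmx X -> psdmx (iter k alpha X).
Proof. by move=> pX; elim: k => //= k; exact: cp_psdmx. Qed.

Lemma colker_cp_sub X Y : psdmx X -> psdmx Y ->
  (colker X <= colker Y)%MS -> (colker (alpha X) <= colker (alpha Y))%MS.
Proof.
move=> pX pY /colker_subP kerXY; have [c dom] := psdmx_dominated pX pY kerXY.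
have : psdmx (alpha (c *: X - Y)).
  by apply: cp_psdmx => x; rewrite qformB qformZ subr_ge0.
rewrite linearB linearZ /= => pD.
apply/colker_subP => x aXx; apply: psdmx_qform_eq0 (cp_psdmx pY) _.
have aX0 : qform (alpha X) x = 0 by rewrite /qform /hform -mulmxA aXx mulmx0 mxE.
apply/eqP; rewrite eq_le cp_psdmx // andbT.
by have := pD x; rewrite qformB qformZ aX0 mulr0 sub0r oppr_ge0.
Qed.

Lemma colker_iter_sub k X Y : psdmx X -> psdmx Y ->
  (colker X <= colker Y)%MS -> (colker (iter k alpha X) <= colker (iter k alpha Y))%MS.
Proof.
by move=> pX pY; elim: k => //= k IH /IH; apply: colker_cp_sub; exact: psdmx_iter.
Qed.

Lemma colker1_sub Y : (colker (1%:M : 'M[C]_s) <= colker Y)%MS.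
Proof. by apply/colker_subP => x; rewrite mul1mx => ->; rewrite mulmx0. Qed.

Lemma colker_iter1_mono k :
  (colker (iter k alpha 1%:M) <= colker (iter k.+1 alpha 1%:M))%MS.
Proof.
by rewrite iterSr; have := colker_iter_sub k psdmx1 (cp_psdmx psdmx1) (colker1_sub _).
Qed.

Lemma colker_iter1_stable k :
  (colker (iter k.+1 alpha 1%:M) <= colker (iter k alpha 1%:M))%MS ->
  (colker (iter k.+2 alpha 1%:M) <= colker (iter k.+1 alpha 1%:M))%MS.
Proof. by apply: colker_cp_sub; apply: psdmx_iter; exact: psdmx1. Qed.

Lemma nilpotent_iter1 m : (forall X, iter m alpha X = 0) -> iter s alpha 1%:M = 0.
Proof.
move=> alpha_nil; apply/eqP; rewrite -colker_full.
apply: (chain_full colker_iter1_mono colker_iter1_stable (m := m)).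
by rewrite colker_full alpha_nil.
Qed.

Lemma iter_psdmx_eq0 Y : iter s alpha 1%:M = 0 -> psdmx Y -> iter s alpha Y = 0.
Proof.
move=> one0 pY; apply/eqP; rewrite -colker_full -sub1mx.
have := colker_iter_sub s psdmx1 pY (colker1_sub Y); rewrite one0.
by apply: submx_trans; rewrite sub1mx colker_full.
Qed.

End CompletelyPositive.

Unset Implicit Arguments. Set Strict Implicit. Set Printing Implicit Defensive.

Theorem lemma8p4 (C : numClosedFieldType) (s : nat)
  (alpha : {linear 'M[C]_s -> 'M[C]_s}) (m : nat) :
  completely_positive alpha ->
  (1 <= m)%N ->
  (forall X : 'M[C]_s, iter m alpha X = 0) ->
  forall X : 'M[C]_s, iter s alpha X = 0.
Proof.
move=> alpha_cp _ alpha_nil.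
have one0 := nilpotent_iter1 alpha_cp alpha_nil.
exact: (linear_eq0_on_psdmx (f := iterlin alpha s)) (fun Y => iter_psdmx_eq0 alpha_cp one0).
Qed.
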